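(* Let $\mathcal{M},\mathcal{N}\in\mathbb{N}$, let $\phi:[0,+\infty)\to(0,1]$ be non-increasing, and let $\boldsymbol{L}\in\mathbb{R}^{\mathcal{M}\times\mathcal{N}}$ be $\phi$-multiplicatively badly approximable. Let $\varepsilon,T>0$, $\boldsymbol{Q}\in[1,+\infty)^{\mathcal{N}}$ and $Q:=(Q_1\cdots Q_{\mathcal{N}})^{1/\mathcal{N}}$. If $\varepsilon Q^{\mathcal{N}}/\phi(Q)<1$, then $\Lambda_{\boldsymbol{L}}\cap Z\subset C$.
   Context: $\|x\|$ is the distance from $x\in\mathbb{R}$ to the nearest integer, $L_i\boldsymbol{q}=\sum_jL_{ij}q_j$ for the rows $L_i$ of $\boldsymbol{L}$. $\boldsymbol{L}$ is $\phi$-multiplicatively badly approximable if for all $\boldsymbol{q}\in\mathbb{Z}^{\mathcal{N}}\setminus\{\boldsymbol{0}\}$, $\prod_{j}\max\{1,|q_j|\}\prod_{i}\|L_i\boldsymbol{q}\|\ge\phi\big((\prod_j\max\{1,|q_j|\})^{1/\mathcal{N}}\big)$. $\Lambda_{\boldsymbol{L}}:=\{(L_1\boldsymbol{q}+p_1,\dots,L_{\mathcal{M}}\boldsymbol{q}+p_{\mathcal{M}},\boldsymbol{q}):\boldsymbol{p}\in\mathbb{Z}^{\mathcal{M}},\boldsymbol{q}\in\mathbb{Z}^{\mathcal{N}}\}$; $H:=\{\boldsymbol{x}\in\mathbb{R}^{\mathcal{M}}:\prod_i|x_i|<\varepsilon,\ |x_i|\le T\ \forall i\}$; $Z:=H\times\prod_{j=1}^{\mathcal{N}}[-Q_j,Q_j]$;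 $C:=\{(\boldsymbol{x},\boldsymbol{y})\in\mathbb{R}^{\mathcal{M}}\times\mathbb{R}^{\mathcal{N}}:\boldsymbol{y}=\boldsymbol{0}\}$. *)

From HB Require Import structures.
From mathcomp Require Import all_boot all_order all_algebra.
From mathcomp Require Import all_classical all_reals all_analysis.
Set Implicit Arguments. Unset Strict Implicit. Unset Printing Implicit Defensive.
Import Order.TTheory GRing.Theory Num.Theory.
Local Open Scope ring_scope.
Local Open Scope classical_set_scope.

Section Defs.
Variable R : realType.

Definition distZ (x : R) : R :=
  Num.min (x - (Num.floor x)%:~R) ((Num.floor x + 1)%:~R - x).

Definition Lrow (M N : nat) (L : 'M[R]_(M, N)) (q : 'I_N -> int) (i : 'I_M) : R :=
  \sum_(j < N) L i j * (q j)%:~R.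

Definition mult_bad_approx (M N : nat) (phi : R -> R) (L : 'M[R]_(M, N)) : Prop :=
  forall q : 'I_N -> int, (exists j, q j != 0) ->
    let P := \prod_(j < N) Num.max 1 `|(q j)%:~R| in
    phi (P `^ (N%:R)^-1) <= P * \prod_(i < M) distZ (Lrow L q i).

Definition pt (M N : nat) := (('I_M -> R) * ('I_N -> R))%type.

Definition LambdaL (M N : nat) (L : 'M[R]_(M, N)) : set (pt M N) :=
  [set z | exists (p : 'I_M -> int) (q : 'I_N -> int),
      (forall i, z.1 i = Lrow L q i + (p i)%:~R) /\ (forall j, z.2 j = (q j)%:~R)].

Definition Hset (M : nat) (eps T : R) : set ('I_M -> R) :=
  [set x | \prod_(i < M) `|x i| < eps /\ forall i, `|x i| <= T].

Definition Zset (M N : nat) (eps T : R) (Qv : 'I_N -> R) : set (pt M N) :=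
  [set z | Hset eps T z.1 /\ forall j, `|z.2 j| <= Qv j].

Definition Cset (M N : nat) : set (pt M N) := [set z | forall j, z.2 j = 0].

End Defs.

(* A nonzero lattice point of [Lambda_L] inside [Z] has integer part [q] of
   height [P := prod_j max(1, |q_j|) <= Q^N] and, since [||L_i q|| <= |L_i q + p_i|],
   approximation defect [D := prod_i ||L_i q|| < eps].  Bad approximability and
   monotonicity of [phi] give [phi(Q) <= phi(P^(1/N)) <= P D < Q^N eps],
   contradicting [eps Q^N / phi(Q) < 1]; hence [q = 0]. *)
From HB Require Import structures.
From mathcomp Require Import all_boot all_order all_algebra.
From mathcomp Require Import all_classical all_reals all_analysis.
From mathcomp Require Import lra zify.
Set Implicit Arguments.
Unset Strict Implicit.
Unset Printing Implicit Defensive.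
Import Order.TTheory GRing.Theory Num.Theory.
Local Open Scope ring_scope.
Local Open Scope classical_set_scope.

Lemma distZ_ge0 (R : realType) (x : R) : 0 <= distZ x.
Proof.
rewrite /distZ le_min subr_ge0 floor_le /= subr_ge0.
by have /andP[_ /ltW] := floor_itv x.
Qed.

Lemma distZ_le_norm_addz (R : realType) (x : R) (n : int) :
  distZ x <= `|x + n%:~R|.
Proof.
rewrite /distZ ge_min; have [nx|xn] := leP (- n) (Num.floor x).
- apply/orP; left; apply: le_trans (ler_norm _).
  have : ((- n)%:~R : R) <= (Num.floor x)%:~R by rewrite ler_int.
  by rewrite mulrNz; lra.
- apply/orP; right; have := ler_norm (- (x + n%:~R)); rewrite normrN.
  have : (Num.floor x + 1)%:~R <= ((- n)%:~R : R) by rewrite ler_int; lia.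
  by rewrite mulrNz intrD; lra.
Qed.

Lemma powR_invn_exprn (R : realType) (a : R) (n : nat) :
  0 <= a -> (0 < n)%N -> (a `^ n%:R^-1) ^+ n = a.
Proof.
move=> a_ge0 n_gt0; rewrite -powR_mulrn ?powR_ge0 // -powRrM mulVf ?powRr1 //.
by rewrite pnatr_eq0 -lt0n.
Qed.

Lemma prod_max1_norm_le (R : realDomainType) (N : nat) (q : 'I_N -> int)
    (Qv : 'I_N -> R) :
  (forall j, 1 <= Qv j) -> (forall j, `|(q j)%:~R| <= Qv j) ->
  \prod_(j < N) Num.max 1 `|(q j)%:~R| <= \prod_(j < N) Qv j.
Proof.
move=> Qv_ge1 qQ; apply: ler_prod => j _.
by rewrite le_max ler01 ge_max Qv_ge1 qQ.
Qed.

Lemma prod_distZ_le_prod_norm (R : realType) (M : nat) (x : 'I_M -> R)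
    (p : 'I_M -> int) :
  \prod_(i < M) distZ (x i) <= \prod_(i < M) `|x i + (p i)%:~R|.
Proof. by apply: ler_prod => i _; rewrite distZ_ge0 distZ_le_norm_addz. Qed.

Section BadlyApproximable.
Variables (R : realType) (M N : nat) (phi : R -> R) (L : 'M[R]_(M, N)).
Hypothesis phi_noninc : forall x y : R, 0 <= x -> x <= y -> phi y <= phi x.
Hypothesis L_bad : mult_bad_approx phi L.

Lemma mult_bad_approx_le_height (q : 'I_N -> int) (A : R) :
  (exists j, q j != 0) ->
  \prod_(j < N) Num.max 1 `|(q j)%:~R| <= A ->
  phi (A `^ N%:R^-1) <= A * \prod_(i < M) distZ (Lrow L q i).
Proof.
move=> q_neq0 PA; set P := \prod_(j < N) _ in PA.
have P_ge0 : 0 <= P by apply: prodr_ge0 => j _; rewrite le_max ler01.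
have phiP : phi (A `^ N%:R^-1) <= phi (P `^ N%:R^-1).
  apply: phi_noninc; first exact: powR_ge0.
  by apply: ge0_ler_powR; rewrite ?invr_ge0 ?ler0n ?nnegrE ?(le_trans P_ge0).
apply: (le_trans phiP); have /= := @L_bad q q_neq0; rewrite -/P => /le_trans; apply.
by apply: ler_wpM2r => //; apply: prodr_ge0 => i _; apply: distZ_ge0.
Qed.

End BadlyApproximable.

Theorem lemma2p5 (R : realType) (M N : nat) (phi : R -> R)
  (phi_range : forall x : R, 0 <= x -> 0 < phi x <= 1)
  (phi_noninc : forall x y : R, 0 <= x -> x <= y -> phi y <= phi x)
  (L : 'M[R]_(M, N)) (hL : mult_bad_approx phi L)
  (eps T : R) (heps : 0 < eps) (hT : 0 < T)
  (Qv : 'I_N -> R) (hQv : forall j, 1 <= Qv j) :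
  let Q := (\prod_(j < N) Qv j) `^ (N%:R)^-1 in
  eps * Q ^+ N / phi Q < 1 ->
  LambdaL L `&` Zset eps T Qv `<=` @Cset R M N.
Proof.
move=> Q small [x y] [[p [q [/= x_def y_def]]] [[x_small _] /= y_le]] j /=.
rewrite y_def; apply/eqP; rewrite intr_eq0; apply: contraT => qj_neq0.
have N_gt0 : (0 < N)%N by case: j {qj_neq0} => /= m; lia.
set A := \prod_(j < N) Qv j.
have A_ge0 : 0 <= A by apply: prodr_ge0 => k _; apply: le_trans (hQv k).
have phiQ_gt0 : 0 < phi Q by have /andP[] := phi_range Q (powR_ge0 _ _).
have defect_lt : \prod_(i < M) distZ (Lrow L q i) < eps.
  apply: le_lt_trans x_small => /=; under [leRHS]eq_bigr do rewrite x_def.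
  exact: prod_distZ_le_prod_norm.
have q_le k : `|(q k)%:~R| <= Qv k by rewrite -y_def y_le.
have := mult_bad_approx_le_height phi_noninc hL (ex_intro _ j qj_neq0)
  (prod_max1_norm_le hQv q_le).
move: small; rewrite powR_invn_exprn // ltr_pdivrMr // mul1r -/A => small.
rewrite -/A -/Q => phiQ_le.
have defect_le : A * \prod_(i < M) distZ (Lrow L q i) <= eps * A.
  by rewrite mulrC ler_wpM2r // ltW.
by have := lt_le_trans (lt_le_trans small phiQ_le) defect_le; rewrite ltxx.
Qed.
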